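(* Let $\mathbb F$ be a field, $q\in\mathbb F$, $f,g\in\mathbb F[h]$. Then $\operatorname{GKdim}\mathcal H_q(f,g)=3$ if and only if $\deg f\le 1$. Moreover, if $\deg f>1$ then $\operatorname{GKdim}\mathcal H_q(f,g)\ge 4$.
   Context: $\mathcal H_q(f,g)$ denotes the unital associative $\mathbb F$-algebra generated by $x,y,h$ with relations $hx=xf(h)$, $yh=f(h)y$, $yx-qxy=g(h)$ (quantum generalized Heisenberg algebra). $\operatorname{GKdim}$ is Gelfand–Kirillov dimension. (Here $\deg f\le 1$ includes constant $f$.) *)

From HB Require Import structures.
From mathcomp Require Import all_boot all_order all_algebra.
From mathcomp Require Import all_classical all_reals all_analysis.
From mathcomp Require Import Rstruct Rstruct_topology.
Set Implicit Arguments. Unset Strict Implicit. Unset Printing Implicit Defensive.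
Import Order.TTheory GRing.Theory Num.Theory.
Local Open Scope ring_scope.

(* Words in the three letters x = 0, y = 1, h = 2.  An element of the free
   algebra F<x,y,h> is a finitely supported function word -> F; we work with
   arbitrary functions word -> F (formal series), on which the concatenation
   (Cauchy) product is well defined, and only ever apply it to polynomials. *)
Definition word := seq 'I_3.
Definition lx : 'I_3 := inord 0.
Definition ly : 'I_3 := inord 1.
Definition lh : 'I_3 := inord 2.

Section FreeAlg.
Variable F : fieldType.

Definition nser := word -> F.

Definition mon (w : word) : nser := fun v => (v == w)%:R.

Definition nmul (p q : nser) : nser :=
  fun w => \sum_(i < (size w).+1) p (take i w) * q (drop i w).

Definition nsub (p q : nser) : nser := fun w => p w - q w.
Definition nscale (c : F) (p : nser) : nser := fun w => c * p w.

Definition pol_h (p : {poly F}) : nser :=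
  fun w => if all (fun a => a == lh) w then p`_(size w) else 0.

(* defining relations of H_q(f,g):
   hx - x f(h),  yh - f(h) y,  yx - q xy - g(h) *)
Definition qgh_rel (q : F) (f g : {poly F}) (k : 'I_3) : nser :=
  if val k == 0%N then nsub (mon [:: lh; lx]) (nmul (mon [:: lx]) (pol_h f))
  else if val k == 1%N then nsub (mon [:: ly; lh]) (nmul (pol_h f) (mon [:: ly]))
  else nsub (nsub (mon [:: ly; lx]) (nscale q (mon [:: lx; ly]))) (pol_h g).

Definition in_qgh_ideal (q : F) (f g : {poly F}) (p : nser) : Prop :=
  exists s : seq (F * word * 'I_3 * word),
    forall w, p w = \sum_(t <- s)
      t.1.1.1 * nmul (nmul (mon t.1.1.2) (qgh_rel q f g t.1.2)) (mon t.2) w.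

Definition indep_words (q : F) (f g : {poly F}) (n k : nat) : Prop :=
  exists ws : k.-tuple word,
    (forall i, size (tnth ws i) <= n)%N /\
    forall c : 'I_k -> F,
      in_qgh_ideal q f g (fun w => \sum_(i < k) c i * mon (tnth ws i) w) ->
      forall i, c i = 0.

(* dim_F V^n where V = F1 + Fx + Fy + Fh (image in H_q(f,g)); V^n is spanned
   by the images of the words of length <= n, of which there are < 3^(n+1). *)
Definition qgh_growth (q : F) (f g : {poly F}) (n : nat) : nat :=
  \max_(k < (3 ^ n.+1).+1 | `[< indep_words q f g n k >]) k.

Definition GKdim_qgh (q : F) (f g : {poly F}) : \bar Rdefinitions.R :=
  limn_esup (fun n => ((ln (qgh_growth q f g n)%:R / ln n%:R : Rdefinitions.R))%:E).

End FreeAlg.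

From HB Require Import structures.
From mathcomp Require Import all_boot all_order all_algebra.
From mathcomp Require Import all_classical all_reals all_analysis.
From mathcomp Require Import Rstruct Rstruct_topology.
From mathcomp Require Import zify ring lra.
Import Order.TTheory GRing.Theory Num.Theory.
Local Open Scope ring_scope.
Set Implicit Arguments. Unset Strict Implicit. Unset Printing Implicit Defensive.

(* Upper bound: when deg f <= 1 the relations rewrite every word of length n
   into a combination of ordered words x^a h^b y^c with a + b + c = O(n), so
   dim V^n = O(n^3).  Lower bound: the algebra acts on the space of maps
   N x N -> F[h], the map supported at (a, c) with value P standing for
   x^a P(h) y^c.  Applied to the vector (0, 0) |-> 1, the word
   x^a h^j x^m h^b y^c gives the map supported at (m + a, c) with value
   (f^(m))^j h^b, of degree j d^m + b where d = deg f.  Any f gives n^3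
   independent such words of length <= 3n (j = m = 0); if d >= 2, the degree
   determines j and b < m <= d^m, which gives m^4 independent words of length
   <= 5m. *)

Lemma catsI (T : Type) (u : seq T) : injective (cat u).
Proof. by elim: u => //= a u IH v w [] /IH. Qed.

Lemma catIs (T : eqType) (u : seq T) : injective (fun v => v ++ u).
Proof.
move=> v w e; have hs : size v = size w.
  by move/(congr1 size)/eqP: e; rewrite !size_cat eqn_add2r => /eqP.
by move/eqP: e; rewrite eqseq_cat // => /andP[/eqP].
Qed.

Lemma nseqSr (T : Type) (n : nat) (x : T) : nseq n.+1 x = nseq n x ++ [:: x].
Proof. by rewrite -addn1 nseqD. Qed.

Section WordMultiplication.
Variable F : fieldType.
Implicit Types (p r : nser F) (u v w a b : word).

(* [lmulw u p] and [rmulw u p] are the products [u * p] and [p * u] by the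
   monomial [u], computed without summing over factorisations. *)
Definition lmulw u p : nser F :=
  fun w => if take (size u) w == u then p (drop (size u) w) else 0.
Definition rmulw u p : nser F :=
  fun w => if drop (size w - size u) w == u then p (take (size w - size u) w) else 0.

Lemma prefixwP u w : reflect (exists v, w = u ++ v) (take (size u) w == u).
Proof.
apply: (iffP eqP) => [h|[v ->]]; last by rewrite take_size_cat.
by exists (drop (size u) w); rewrite -[X in X ++ _]h cat_take_drop.
Qed.

Lemma suffixwP u w : reflect (exists v, w = v ++ u) (drop (size w - size u) w == u).
Proof.
apply: (iffP eqP) => [h|[v ->]]; last by rewrite size_cat addnK drop_size_cat.
by exists (take (size w - size u) w); rewrite -[X in _ ++ X]h cat_take_drop.
Qed.

Lemma lmulw_cat u p v : lmulw u p (u ++ v) = p v.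
Proof. by rewrite /lmulw take_size_cat // eqxx drop_size_cat. Qed.

Lemma lmulw_notprefix u p w : ~ (exists v, w = u ++ v) -> lmulw u p w = 0.
Proof. by rewrite /lmulw; case: prefixwP. Qed.

Lemma rmulw_cat u p v : rmulw u p (v ++ u) = p v.
Proof. by rewrite /rmulw size_cat addnK drop_size_cat // eqxx take_size_cat. Qed.

Lemma rmulw_notsuffix u p w : ~ (exists v, w = v ++ u) -> rmulw u p w = 0.
Proof. by rewrite /rmulw; case: suffixwP. Qed.

Lemma monE v w : mon F v w = (w == v)%:R.
Proof. by []. Qed.

Lemma lmulw_mon u v : lmulw u (mon F v) = mon F (u ++ v).
Proof.
apply: funext => w; case: (prefixwP u w) => [[d ->]|nh].
  by rewrite lmulw_cat !monE eqseq_cat // eqxx.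
rewrite lmulw_notprefix // monE; case: eqP => // e; case: nh; by exists v.
Qed.

Lemma rmulw_mon u v : rmulw u (mon F v) = mon F (v ++ u).
Proof.
apply: funext => w; case: (suffixwP u w) => [[d ->]|nh].
  by rewrite rmulw_cat !monE (inj_eq (@catIs _ u)).
rewrite rmulw_notsuffix // monE; case: eqP => // e; case: nh; by exists v.
Qed.

Lemma lmulwA u a p : lmulw u (lmulw a p) = lmulw (u ++ a) p.
Proof.
apply: funext => w; case: (prefixwP u w) => [[v ->]|nh].
  rewrite lmulw_cat; case: (prefixwP a v) => [[z ->]|na].
    by rewrite lmulw_cat catA lmulw_cat.
  rewrite !lmulw_notprefix // => -[z]; rewrite -catA => /catsI e.
  by apply: na; exists z.
rewrite !lmulw_notprefix // => -[z e]; apply: nh; exists (a ++ z); by rewrite e catA.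
Qed.

Lemma rmulwA u b p : rmulw u (rmulw b p) = rmulw (b ++ u) p.
Proof.
apply: funext => w; case: (suffixwP u w) => [[v ->]|nh].
  rewrite rmulw_cat; case: (suffixwP b v) => [[z ->]|nb].
    by rewrite rmulw_cat -catA rmulw_cat.
  rewrite !rmulw_notsuffix // => -[z]; rewrite catA => /catIs e.
  by apply: nb; exists z.
rewrite !rmulw_notsuffix // => -[z e]; apply: nh; exists (z ++ b); by rewrite e catA.
Qed.

Lemma lmulw_rmulw u b p : lmulw u (rmulw b p) = rmulw b (lmulw u p).
Proof.
apply: funext => w; case: (prefixwP u w) => [[v ->]|nh].
  rewrite lmulw_cat; case: (suffixwP b v) => [[z ->]|nb].
    by rewrite rmulw_cat catA rmulw_cat lmulw_cat.
  rewrite rmulw_notsuffix //; case: (suffixwP b (u ++ v)) => [[z e]|nb2].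
    rewrite e rmulw_cat; case: (prefixwP u z) => [[z' ez]|nz]; last by rewrite lmulw_notprefix.
    by case: nb; exists z'; move: e; rewrite ez -catA => /catsI.
  by rewrite rmulw_notsuffix.
rewrite lmulw_notprefix //; case: (suffixwP b w) => [[z e]|nb2]; last by rewrite rmulw_notsuffix.
rewrite e rmulw_cat; case: (prefixwP u z) => [[z' ez]|nz]; last by rewrite lmulw_notprefix.
by case: nh; exists (z' ++ b); rewrite e ez catA.
Qed.

Lemma lmulw_nil p : lmulw [::] p = p.
Proof. by apply: funext => w; rewrite /lmulw take0 drop0 eqxx. Qed.

Lemma rmulw_nil p : rmulw [::] p = p.
Proof. by apply: funext => w; rewrite /rmulw subn0 drop_size take_size eqxx. Qed.

Lemma lmulw_sum (I : Type) (s : seq I) (G : I -> nser F) u w :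
  lmulw u (fun v => \sum_(i <- s) G i v) w = \sum_(i <- s) lmulw u (G i) w.
Proof. by rewrite /lmulw; case: ifP => _ //; rewrite big1. Qed.

Lemma rmulw_sum (I : Type) (s : seq I) (G : I -> nser F) u w :
  rmulw u (fun v => \sum_(i <- s) G i v) w = \sum_(i <- s) rmulw u (G i) w.
Proof. by rewrite /rmulw; case: ifP => _ //; rewrite big1. Qed.

Lemma lmulwZ c p u w : lmulw u (fun v => c * p v) w = c * lmulw u p w.
Proof. by rewrite /lmulw; case: ifP => _ //; rewrite mulr0. Qed.

Lemma rmulwZ c p u w : rmulw u (fun v => c * p v) w = c * rmulw u p w.
Proof. by rewrite /rmulw; case: ifP => _ //; rewrite mulr0. Qed.

Lemma lmulwB p r u w : lmulw u (fun v => p v - r v) w = lmulw u p w - lmulw u r w.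
Proof. by rewrite /lmulw; case: ifP => _ //; rewrite subr0. Qed.

Lemma rmulwB p r u w : rmulw u (fun v => p v - r v) w = rmulw u p w - rmulw u r w.
Proof. by rewrite /rmulw; case: ifP => _ //; rewrite subr0. Qed.

Lemma nmul_monl a p : nmul (mon F a) p = lmulw a p.
Proof.
apply: funext => w; rewrite /nmul.
case: (prefixwP a w) => [[v ->]|nh].
  have ha : (size a < (size (a ++ v)).+1)%N by rewrite size_cat ltnS leq_addr.
  rewrite (bigD1 (Ordinal ha)) //= take_size_cat // drop_size_cat // monE eqxx mul1r.
  rewrite big1 ?addr0 ?lmulw_cat // => i /eqP ne; rewrite monE.
  case: eqP => [e|]; last by rewrite mul0r.
  case: ne; apply: val_inj => /=.
  have hi : (i <= size (a ++ v))%N by rewrite -ltnS ltn_ord.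
  by move: (congr1 size e); rewrite size_takel.
rewrite lmulw_notprefix // big1 // => i _; rewrite monE; case: eqP => [e|]; last by rewrite mul0r.
by case: nh; exists (drop i w); rewrite -e cat_take_drop.
Qed.

Lemma nmul_monr b p : nmul p (mon F b) = rmulw b p.
Proof.
apply: funext => w; rewrite /nmul.
case: (suffixwP b w) => [[v ->]|nh].
  have ha : (size v < (size (v ++ b)).+1)%N by rewrite size_cat ltnS leq_addr.
  rewrite (bigD1 (Ordinal ha)) //= take_size_cat // drop_size_cat // monE eqxx mulr1.
  rewrite big1 ?addr0 ?rmulw_cat // => i /eqP ne; rewrite monE.
  case: eqP => [e|]; last by rewrite mulr0.
  case: ne; apply: val_inj => /=.
  have hi : (i <= size v + size b)%N by rewrite -size_cat -ltnS ltn_ord.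
  move: (congr1 size e); rewrite size_drop => e2.
  have e3 : (size v + size b - i = size b)%N by rewrite -size_cat.
  apply/eqP; lia.
rewrite rmulw_notsuffix // big1 // => i _; rewrite monE; case: eqP => [e|]; last by rewrite mulr0.
by case: nh; exists (take i w); rewrite -e cat_take_drop.
Qed.

End WordMultiplication.

Section Ideal.
Variable F : fieldType.
Variables (q : F) (f g : {poly F}).
Local Notation rel := (qgh_rel q f g).
Local Notation mon := (mon F).
Implicit Types (p r : nser F) (u v w : word).

Definition sandwich (t : F * word * 'I_3 * word) : nser F :=
  fun w => t.1.1.1 * rmulw t.2 (lmulw t.1.1.2 (rel t.1.2)) w.

Definition in_ideal p := exists s, forall w, p w = \sum_(t <- s) sandwich t w.

Lemma in_qgh_idealE p : in_qgh_ideal q f g p <-> in_ideal p.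
Proof.
split=> -[s hs]; exists s => w; rewrite hs;
  by apply: eq_bigr => t _; rewrite /sandwich nmul_monl nmul_monr.
Qed.

Lemma in_ideal_ext p r : in_ideal p -> (forall w, p w = r w) -> in_ideal r.
Proof. by move=> [s hs] e; exists s => w; rewrite -e. Qed.

Lemma in_ideal0 : in_ideal (fun _ => 0).
Proof. by exists [::] => w; rewrite big_nil. Qed.

Lemma in_idealD p r : in_ideal p -> in_ideal r -> in_ideal (fun w => p w + r w).
Proof. by move=> [s hs] [s' hs']; exists (s ++ s') => w; rewrite big_cat hs hs'. Qed.

Lemma in_idealZ c p : in_ideal p -> in_ideal (fun w => c * p w).
Proof.
move=> [s hs]; exists [seq (c * t.1.1.1, t.1.1.2, t.1.2, t.2) | t <- s] => w.
by rewrite hs big_map mulr_sumr; apply: eq_bigr => t _; rewrite /sandwich /= mulrA.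
Qed.

Lemma in_ideal_sum (I : Type) (s : seq I) (G : I -> nser F) :
  (forall i, in_ideal (G i)) -> in_ideal (fun w => \sum_(i <- s) G i w).
Proof.
move=> hG; elim: s => [|i s IH].
  by apply: in_ideal_ext in_ideal0 _ => w; rewrite big_nil.
by apply: in_ideal_ext (in_idealD (hG i) IH) _ => w; rewrite big_cons.
Qed.

Lemma in_ideal_lmulw u p : in_ideal p -> in_ideal (lmulw u p).
Proof.
move=> [s hs]; exists [seq (t.1.1.1, u ++ t.1.1.2, t.1.2, t.2) | t <- s] => w.
rewrite (funext hs) lmulw_sum big_map; apply: eq_bigr => t _.
by rewrite /sandwich /= lmulwZ lmulw_rmulw lmulwA.
Qed.

Lemma in_ideal_rmulw u p : in_ideal p -> in_ideal (rmulw u p).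
Proof.
move=> [s hs]; exists [seq (t.1.1.1, t.1.1.2, t.1.2, t.2 ++ u) | t <- s] => w.
rewrite (funext hs) rmulw_sum big_map; apply: eq_bigr => t _.
by rewrite /sandwich /= rmulwZ rmulwA.
Qed.

Lemma in_ideal_rel k : in_ideal (rel k).
Proof.
exists [:: (1, [::], k, [::])] => w.
by rewrite big_seq1 /sandwich /= mul1r lmulw_nil rmulw_nil.
Qed.

Definition lincomb (s : seq (F * word)) : nser F :=
  fun w => \sum_(t <- s) t.1 * mon t.2 w.

Definition reduces (Q : word -> Prop) p :=
  exists s, (forall t, t \in s -> Q t.2) /\ in_ideal (fun w => p w - lincomb s w).

Lemma reduces_mono (Q Q' : word -> Prop) p :
  (forall v, Q v -> Q' v) -> reduces Q p -> reduces Q' p.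
Proof. by move=> hQ [s [hs hI]]; exists s; split => // t /hs /hQ. Qed.

Lemma reduces_ideal Q p : in_ideal p -> reduces Q p.
Proof.
move=> hI; exists [::]; split => //.
by apply: in_ideal_ext hI _ => w; rewrite /lincomb big_nil subr0.
Qed.

Lemma reduces_mon (Q : word -> Prop) v : Q v -> reduces Q (mon v).
Proof.
move=> hv; exists [:: (1, v)]; split; first by move=> t; rewrite inE => /eqP ->.
by apply: in_ideal_ext in_ideal0 _ => w; rewrite /lincomb big_seq1 mul1r subrr.
Qed.

Lemma reducesD Q p r : reduces Q p -> reduces Q r -> reduces Q (fun w => p w + r w).
Proof.
move=> [s [hs hI]] [s' [hs' hI']]; exists (s ++ s'); split.
  by move=> t; rewrite mem_cat => /orP[/hs|/hs'].
by apply: in_ideal_ext (in_idealD hI hI') _ => w; rewrite /lincomb big_cat /=; ring.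
Qed.

Lemma reducesZ Q c p : reduces Q p -> reduces Q (fun w => c * p w).
Proof.
move=> [s [hs hI]]; exists [seq (c * t.1, t.2) | t <- s]; split.
  by move=> t /mapP[t' /hs ? ->].
apply: in_ideal_ext (in_idealZ c hI) _ => w; rewrite /lincomb big_map mulrBr mulr_sumr.
by congr (_ - _); apply: eq_bigr => t _ /=; rewrite mulrA.
Qed.

Lemma reduces_lincomb Q s :
  (forall t, t \in s -> reduces Q (mon t.2)) -> reduces Q (lincomb s).
Proof.
elim: s => [|t s IH] h.
  rewrite (_ : lincomb _ = fun _ => 0); first exact/reduces_ideal/in_ideal0.
  by apply: funext => w; rewrite /lincomb big_nil.
have IH' : reduces Q (lincomb s) by apply: IH => t' ht'; apply: h; rewrite inE ht' orbT.
rewrite (_ : lincomb _ = fun w => t.1 * mon t.2 w + lincomb s w).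
  exact: reducesD (reducesZ _ (h t (mem_head _ _))) IH'.
by apply: funext => w; rewrite /lincomb big_cons.
Qed.

Lemma reduces_trans (P Q : word -> Prop) p :
  reduces P p -> (forall v, P v -> reduces Q (mon v)) -> reduces Q p.
Proof.
move=> [s [hs hI]] h.
have hl : reduces Q (lincomb s) by apply: reduces_lincomb => t /hs; exact: h.
rewrite (_ : p = fun w => (p w - lincomb s w) + lincomb s w).
  exact: reducesD (reduces_ideal Q hI) hl.
by apply: funext => w; rewrite subrK.
Qed.

Lemma reduces_lmulw (Q : word -> Prop) u p :
  reduces Q p -> reduces (fun w => exists v, Q v /\ w = u ++ v) (lmulw u p).
Proof.
move=> [s [hs hI]]; exists [seq (t.1, u ++ t.2) | t <- s]; split.
  by move=> t /mapP[t' /hs ? ->]; exists t'.2.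
apply: in_ideal_ext (in_ideal_lmulw u hI) _ => w; rewrite lmulwB; congr (_ - _).
rewrite /lincomb lmulw_sum big_map; apply: eq_bigr => t _ /=.
by rewrite lmulwZ lmulw_mon.
Qed.

Lemma reduces_rmulw (Q : word -> Prop) u p :
  reduces Q p -> reduces (fun w => exists v, Q v /\ w = v ++ u) (rmulw u p).
Proof.
move=> [s [hs hI]]; exists [seq (t.1, t.2 ++ u) | t <- s]; split.
  by move=> t /mapP[t' /hs ? ->]; exists t'.2.
apply: in_ideal_ext (in_ideal_rmulw u hI) _ => w; rewrite rmulwB; congr (_ - _).
rewrite /lincomb rmulw_sum big_map; apply: eq_bigr => t _ /=.
by rewrite rmulwZ rmulw_mon.
Qed.

End Ideal.

Lemma val_lx : val lx = 0%N. Proof. by rewrite /lx /= inordK. Qed.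
Lemma val_ly : val ly = 1%N. Proof. by rewrite /ly /= inordK. Qed.
Lemma val_lh : val lh = 2%N. Proof. by rewrite /lh /= inordK. Qed.

Lemma letterP (l : 'I_3) : l = lx \/ l = ly \/ l = lh.
Proof.
case: l => [[|[|[|m]]] hm] //; [left|right; left|right; right];
  by apply: val_inj; rewrite /= ?val_lx ?val_ly ?val_lh.
Qed.

Section Reduction.
Variable F : fieldType.
Variables (q : F) (f g : {poly F}).
Local Notation mon := (mon F).
Local Notation reduces := (reduces q f g).
Implicit Types (u v w : word).

Lemma pol_hE (p : {poly F}) w :
  pol_h p w = \sum_(i < size p) p`_i * mon (nseq i lh) w.
Proof.
rewrite /pol_h; case: ifP => hw; last first.
  rewrite big1 // => i _; rewrite monE; case: eqP => [e|]; last by rewrite mulr0.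
  by move: hw; rewrite e all_nseq eqxx orbT.
have e : w = nseq (size w) lh by apply/all_pred1P.
case: (ltnP (size w) (size p)) => hs.
  rewrite (bigD1 (Ordinal hs)) //= big1 ?addr0; first by rewrite monE -e eqxx mulr1.
  move=> i /eqP ne; rewrite monE; case: eqP => [e2|]; last by rewrite mulr0.
  by case: ne; apply: val_inj => /=; rewrite e2 size_nseq.
rewrite nth_default // big1 // => i _; rewrite monE; case: eqP => [e2|]; last by rewrite mulr0.
by have := ltn_ord i; rewrite -[X in (X < _)%N](size_nseq i lh) -e2; lia.
Qed.

Lemma lincomb_iota (n : nat) (G : nat -> F) (W : nat -> word) w :
  lincomb [seq (G i, W i) | i <- index_iota 0 n] w = \sum_(i < n) G i * mon (W i) w.
Proof. by rewrite /lincomb big_map big_mkord. Qed.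

Lemma mem_iota_map (n : nat) (G : nat -> F) (W : nat -> word) t :
  t \in [seq (G i, W i) | i <- index_iota 0 n] -> exists2 i, (i < n)%N & t.2 = W i.
Proof. by move=> /mapP[i]; rewrite mem_index_iota => /andP[_ hi] ->; exists i. Qed.

Lemma reduces_hx :
  reduces (fun v => exists2 i, (i < size f)%N & v = lx :: nseq i lh) (mon [:: lh; lx]).
Proof.
exists [seq (f`_i, lx :: nseq i lh) | i <- index_iota 0 (size f)]; split.
  by move=> t /mem_iota_map.
apply: in_ideal_ext (in_ideal_rel q f g lx) _ => w.
rewrite /qgh_rel val_lx /= /nsub nmul_monl lincomb_iota (funext (pol_hE f)) lmulw_sum.
by congr (_ - _); apply: eq_bigr => i _; rewrite lmulwZ lmulw_mon.
Qed.

Lemma reduces_yh :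
  reduces (fun v => exists2 i, (i < size f)%N & v = nseq i lh ++ [:: ly]) (mon [:: ly; lh]).
Proof.
exists [seq (f`_i, nseq i lh ++ [:: ly]) | i <- index_iota 0 (size f)]; split.
  by move=> t /mem_iota_map.
apply: in_ideal_ext (in_ideal_rel q f g ly) _ => w.
rewrite /qgh_rel val_ly /= /nsub nmul_monr lincomb_iota (funext (pol_hE f)) rmulw_sum.
by congr (_ - _); apply: eq_bigr => i _; rewrite rmulwZ rmulw_mon.
Qed.

Lemma reduces_yx : reduces
  (fun v => v = [:: lx; ly] \/ exists2 i, (i < size g)%N & v = nseq i lh) (mon [:: ly; lx]).
Proof.
exists ((q, [:: lx; ly]) :: [seq (g`_i, nseq i lh) | i <- index_iota 0 (size g)]); split.
  move=> t; rewrite inE => /orP[/eqP -> /=|/mem_iota_map [i hi ->]]; first by left.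
  by right; exists i.
apply: in_ideal_ext (in_ideal_rel q f g lh) _ => w.
rewrite /qgh_rel val_lh /= /nsub /nscale /lincomb big_cons big_map big_mkord pol_hE /=.
ring.
Qed.

Hypothesis size_f : (size f <= 2)%N.

Lemma reduces_hxn a :
  reduces (fun v => v = nseq a lx \/ v = nseq a lx ++ [:: lh]) (mon (lh :: nseq a lx)).
Proof.
elim: a => [|a IH]; first by apply: reduces_mon; right.
rewrite -[mon _]/(mon ([:: lh; lx] ++ nseq a lx)) -rmulw_mon.
apply: reduces_trans (reduces_rmulw _ reduces_hx) _ => v [v' [[[|[|i]] hi ->] ->]].
- by apply: reduces_mon; left.
- rewrite -[mon _]/(mon ([:: lx] ++ lh :: nseq a lx)) -lmulw_mon.
  by apply: reduces_mono (reduces_lmulw _ IH) => w [v'' [[->|->] ->]]; [left|right].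
- by move: hi size_f; lia.
Qed.

Lemma reduces_hnxn i a : reduces
  (fun v => exists2 j, (j <= i)%N & v = nseq a lx ++ nseq j lh) (mon (nseq i lh ++ nseq a lx)).
Proof.
elim: i => [|i IH]; first by apply: reduces_mon; exists 0 => //; rewrite cats0.
rewrite -[mon _]/(mon ([:: lh] ++ nseq i lh ++ nseq a lx)) -lmulw_mon.
apply: reduces_trans (reduces_lmulw _ IH) _ => v [v' [[j hj ->] ->]].
rewrite catA -rmulw_mon.
apply: reduces_trans (reduces_rmulw _ (reduces_hxn a)) _ => v2 [v'' [[->|->] ->]].
  by apply: reduces_mon; exists j => //; apply: leqW.
by apply: reduces_mon; exists j.+1 => //; rewrite -catA.
Qed.

Lemma reduces_yhn b : reduces
  (fun v => exists2 j, (j <= b)%N & v = nseq j lh ++ [:: ly]) (mon (ly :: nseq b lh)).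
Proof.
elim: b => [|b IH]; first by apply: reduces_mon; exists 0.
rewrite -[mon _]/(mon ([:: ly] ++ nseq b.+1 lh)) nseqSr catA -rmulw_mon.
apply: reduces_trans (reduces_rmulw _ IH) _ => v [v' [[j hj ->] ->]].
rewrite -catA -lmulw_mon.
apply: reduces_trans (reduces_lmulw _ reduces_yh) _ => v2 [v'' [[i hi ->] ->]].
apply: reduces_mon; exists (j + i); first by move: hi size_f hj; lia.
by rewrite nseqD catA.
Qed.

Lemma reduces_yxn a : reduces (fun v => v = nseq a lx ++ [:: ly] \/
    exists2 i, (i < size g)%N & (0 < a)%N /\ v = nseq a.-1 lx ++ nseq i lh)
  (mon (ly :: nseq a lx)).
Proof.
elim: a => [|a IH]; first by apply: reduces_mon; left.
rewrite -[mon _]/(mon ([:: ly; lx] ++ nseq a lx)) -rmulw_mon.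
apply: reduces_trans (reduces_rmulw _ reduces_yx) _ => v [v' [[->|[i hi ->]] ->]].
  rewrite -[mon _]/(mon ([:: lx] ++ ly :: nseq a lx)) -lmulw_mon.
  apply: reduces_mono (reduces_lmulw _ IH) => w [v'' [[->|[i hi [ha ->]]] ->]].
    by left.
  by right; exists i => //; split => //; case: a ha IH.
apply: reduces_mono (reduces_hnxn i a) => w [j hj ->]; right.
by exists j; [move: hj hi; lia | split].
Qed.

Definition normal_word (D W : nat) (v : word) :=
  exists a b c, v = nseq a lx ++ nseq b lh ++ nseq c ly /\ (D * a + b + D * c <= W)%N.

Lemma normal_word_mono D W1 W2 v :
  (W1 <= W2)%N -> normal_word D W1 v -> normal_word D W2 v.
Proof. by move=> h [a [b [c [-> hw]]]]; exists a, b, c; split => //; apply: leq_trans h. Qed.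

(* y crosses x^a by yx = qxy + g(h) and then h^b by yh = f(h)y, h crosses x^a
   by hx = xf(h); as deg f <= 1 the h-part grows by at most deg g per letter. *)
Lemma reduces_letter_normal D l a b c : (size g < D)%N ->
  reduces (normal_word D (D * a + b + D * c + D))
    (mon (l :: nseq a lx ++ nseq b lh ++ nseq c ly)).
Proof.
move=> hD; case: (letterP l) => [->|[->|->]].
- by apply: reduces_mon; exists a.+1, b, c; split => //; rewrite mulnS; lia.
- rewrite -[mon _]/(mon ((ly :: nseq a lx) ++ nseq b lh ++ nseq c ly)) -rmulw_mon.
  apply: reduces_trans (reduces_rmulw _ (reduces_yxn a)) _.
  move=> v2 [v0 [[->|[i hi [ha ->]]] ->]]; last first.
    apply: reduces_mon; exists a.-1, (i + b), c; split; first by rewrite nseqD !catA.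
    by case: a ha => // a _; rewrite /= mulnS; lia.
  rewrite -catA /= -[_ :: _]/([:: ly] ++ nseq b lh ++ nseq c ly).
  rewrite -[mon _](lmulw_mon _ (nseq a lx)) catA -rmulw_mon.
  apply: reduces_trans (reduces_lmulw _ (reduces_rmulw _ (reduces_yhn b))) _.
  move=> v3 [v1 [[v4 [[j hj ->] ->]] ->]].
  apply: reduces_mon; exists a, j, c.+1; split; first by rewrite -!catA.
  by rewrite mulnS; lia.
- rewrite -[mon _]/(mon ((lh :: nseq a lx) ++ nseq b lh ++ nseq c ly)) -rmulw_mon.
  apply: reduces_trans (reduces_rmulw _ (reduces_hxn a)) _ => v2 [v0 [[->|->] ->]].
    by apply: reduces_mon; exists a, b, c; split => //; lia.
  by apply: reduces_mon; exists a, b.+1, c; split; [rewrite -catA | lia].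
Qed.

Lemma reduces_normal_word w :
  reduces (normal_word (size g).+1 ((size g).+1 * size w)) (mon w).
Proof.
elim: w => [|l w IH]; first by apply: reduces_mon; exists 0, 0, 0; rewrite muln0.
rewrite -[mon _]/(mon ([:: l] ++ w)) -lmulw_mon.
apply: reduces_trans (reduces_lmulw _ IH) _ => v [v' [[a [b [c [-> hw]]]] ->]].
apply: reduces_mono (reduces_letter_normal l a b c (ltnSn _)) => u.
by apply: normal_word_mono; rewrite /= mulnS addnC leq_add2l.
Qed.

End Reduction.

Lemma nontrivial_row_relation (F : fieldType) k N (A : 'M[F]_(k, N)) : (N < k)%N ->
  exists c : 'I_k -> F, (exists i, c i != 0) /\ forall j, \sum_i c i * A i j = 0.
Proof.
move=> hNk; have hK : kermx A != 0.
  apply/negP => /eqP hK0; have := mxrank_ker A; rewrite hK0 mxrank0 => /esym/eqP.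
  by rewrite subn_eq0 => /leq_trans/(_ (rank_leq_col A)); rewrite leqNgt hNk.
have [i0 [j0 hij]] : exists i0 j0, kermx A i0 j0 != 0.
  case: (pselect (exists i0 j0, kermx A i0 j0 != 0)) => // hno.
  move/eqP: hK; case; apply/matrixP => i j; rewrite [RHS]mxE.
  by apply/eqP/negPn/negP => h; apply: hno; exists i, j.
exists (kermx A i0); split; first by exists j0.
move=> j; have := congr1 (fun M : 'M[F]_(k, N) => M i0 j) (mulmx_ker A).
by rewrite !mxE.
Qed.

Section UpperBound.
Variable F : fieldType.
Variables (q : F) (f g : {poly F}).
Local Notation mon := (mon F).
Local Notation reduces := (reduces q f g).

Lemma lincomb_finite (T : finType) (nw : T -> word) (s : seq (F * word)) w :
  injective nw -> (forall t, t \in s -> exists tau, t.2 = nw tau) ->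
  lincomb s w =
    \sum_(j < #|T|) (\sum_(t <- s) t.1 * (t.2 == nw (enum_val j))%:R) * mon (nw (enum_val j)) w.
Proof.
move=> nw_inj; elim: s => [|t s IH] hs.
  by rewrite /lincomb big_nil big1 // => j _; rewrite big_nil mul0r.
rewrite /lincomb big_cons -/(lincomb s w) IH; last first.
  by move=> t' ht'; apply: hs; rewrite inE ht' orbT.
under [in RHS]eq_bigr => j _ do rewrite big_cons mulrDl.
rewrite big_split /=; congr (_ + _).
have [tau ->] := hs t (mem_head _ _).
rewrite (bigD1 (enum_rank tau)) //= enum_rankK eqxx mulr1 big1 ?addr0 // => j hj.
case: eqP => [/nw_inj e|]; last by rewrite mulr0 mul0r.
by move: hj; rewrite e enum_valK eqxx.
Qed.

Lemma reduces_dependent (T : finType) (nw : T -> word) k (ws : k.-tuple word) :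
  injective nw -> (#|T| < k)%N ->
  (forall i, reduces (fun v => exists t, v = nw t) (mon (tnth ws i))) ->
  exists c : 'I_k -> F, (exists i, c i != 0) /\
    in_qgh_ideal q f g (fun w => \sum_(i < k) c i * mon (tnth ws i) w).
Proof.
move=> nw_inj hk hred.
pose S i := projT1 (cid (hred i)).
have hS i : (forall t, t \in S i -> exists tau, t.2 = nw tau) /\
    in_ideal q f g (fun w => mon (tnth ws i) w - lincomb (S i) w).
  exact: (projT2 (cid (hred i))).
pose A : 'M[F]_(k, #|T|) :=
  \matrix_(i, j) \sum_(t <- S i) t.1 * (t.2 == nw (enum_val j))%:R.
have [c [hc hcA]] := nontrivial_row_relation A hk.
exists c; split => //; apply/in_qgh_idealE.
apply: in_ideal_ext (in_ideal_sum (index_enum 'I_k)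
  (fun i => in_idealZ (c i) (hS i).2)) _ => w /=.
under eq_bigr => i _ do rewrite mulrBr.
rewrite sumrB; suff -> : \sum_(i < k) c i * lincomb (S i) w = 0 by rewrite subr0.
under eq_bigr => i _ do rewrite (lincomb_finite _ nw_inj (hS i).1) mulr_sumr.
rewrite exchange_big /= big1 // => j _.
transitivity ((\sum_i c i * A i j) * mon (nw (enum_val j)) w); last by rewrite hcA mul0r.
by rewrite mulr_suml; apply: eq_bigr => i _; rewrite mxE mulrA.
Qed.

Definition normal_word_of W (t : 'I_W.+1 * 'I_W.+1 * 'I_W.+1) : word :=
  nseq t.1.1 lx ++ nseq t.1.2 lh ++ nseq t.2 ly.

Lemma normal_word_of_inj W : injective (@normal_word_of W).
Proof.
have lx_ly : (lx == ly) = false by apply/negbTE/negP => /eqP/(congr1 val); rewrite val_lx val_ly.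
have lx_lh : (lx == lh) = false by apply/negbTE/negP => /eqP/(congr1 val); rewrite val_lx val_lh.
have ly_lh : (ly == lh) = false by apply/negbTE/negP => /eqP/(congr1 val); rewrite val_ly val_lh.
move=> [[a b] c] [[a' b'] c'] e.
have := congr1 (count (pred1 lx)) e; have := congr1 (count (pred1 lh)) e.
have := congr1 (count (pred1 ly)) e.
rewrite /normal_word_of /= !count_cat !count_nseq /= !eqxx.
rewrite [ly == lx]eq_sym [lh == lx]eq_sym [lh == ly]eq_sym lx_ly lx_lh ly_lh /=.
by rewrite !mul0n !mul1n !add0n !addn0 => /val_inj -> /val_inj -> /val_inj ->.
Qed.

Lemma normal_word_ofP D W v : (0 < D)%N ->
  normal_word D W v -> exists t, v = @normal_word_of W t.
Proof.
move=> hD [a [b [c [-> hw]]]].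
have ha : (a < W.+1)%N by rewrite ltnS; apply: leq_trans hw; nia.
have hb : (b < W.+1)%N by rewrite ltnS; apply: leq_trans hw; nia.
have hc : (c < W.+1)%N by rewrite ltnS; apply: leq_trans hw; nia.
by exists (Ordinal ha, Ordinal hb, Ordinal hc).
Qed.

Lemma indep_words_le (size_f : (size f <= 2)%N) n k :
  indep_words q f g n k -> (k <= ((size g).+1 * n).+1 ^ 3)%N.
Proof.
move=> [ws [hsz hind]]; set W := ((size g).+1 * n)%N.
have hcard : #|{: 'I_W.+1 * 'I_W.+1 * 'I_W.+1}| = (W.+1 ^ 3)%N.
  by rewrite !card_prod !card_ord !expnS expn0 muln1 mulnA.
rewrite -hcard leqNgt; apply/negP => hk.
have hred i : reduces (fun v => exists t, v = @normal_word_of W t) (mon (tnth ws i)).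
  apply: reduces_mono (@reduces_normal_word F q f g size_f (tnth ws i)) => v.
  move/(normal_word_mono (W2 := W)); rewrite leq_mul2l hsz orbT => /(_ isT).
  exact: normal_word_ofP.
have [c [[i hci] hI]] := reduces_dependent (@normal_word_of_inj W) hk hred.
by move: hci; rewrite (hind c hI i) eqxx.
Qed.

Lemma qgh_growth_le (size_f : (size f <= 2)%N) n :
  (qgh_growth q f g n <= ((size g).+1 * n).+1 ^ 3)%N.
Proof. by apply/bigmax_leqP => i /asboolP; apply: indep_words_le. Qed.

End UpperBound.

Fixpoint words_upto (N : nat) : seq word :=
  if N is N'.+1 then [::] :: [seq l :: w | l <- enum 'I_3, w <- words_upto N']
  else [:: [::]].

Lemma mem_words_upto N w : (w \in words_upto N) = (size w <= N)%N.
Proof.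
elim: N w => [|N IH] w; first by rewrite inE leqn0 size_eq0.
case: w => [|l w]; first by rewrite inE eqxx.
rewrite inE /= ltnS -IH; apply/allpairsP/idP => [[[l' w'] [_ /= hw [_ ->]]] //|hw].
by exists (l, w); rewrite mem_enum.
Qed.

Lemma uniq_words_upto N : uniq (words_upto N).
Proof.
elim: N => [|N IH] //=; apply/andP; split.
  by apply/negP => /allpairsP[[l' w'] [_ _]].
apply: allpairs_uniq => //; first exact: enum_uniq.
by move=> [l1 w1] [l2 w2] _ _ /= [-> ->].
Qed.

Lemma sum_words_upto_reindex (V : nmodType) (I : eqType) (s : seq I) (gm : I -> word)
    N (G : word -> V) :
  uniq s -> {in s &, injective gm} -> (forall i, i \in s -> size (gm i) <= N)%N ->
  (forall w, (size w <= N)%N -> G w != 0 -> exists2 i, i \in s & w = gm i) ->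
  \sum_(w <- words_upto N) G w = \sum_(i <- s) G (gm i).
Proof.
move=> us ig hs hG; rewrite (bigID (mem (map gm s))) /=.
rewrite [X in _ + X]big_seq_cond [X in _ + X]big1 ?addr0; last first.
  move=> w /andP[hw hn]; apply/eqP/negPn/negP => /(hG w) [|i hi e].
    by rewrite -mem_words_upto.
  by move: hn; rewrite e map_f.
rewrite -big_filter -(big_map gm xpredT); apply/perm_big/uniq_perm.
- exact/filter_uniq/uniq_words_upto.
- by rewrite map_inj_in_uniq.
move=> w; rewrite mem_filter; apply/andP/idP => [[] //|hw]; split => //.
by move: hw => /mapP[i hi ->]; rewrite mem_words_upto hs.
Qed.

Arguments sum_words_upto_reindex {V I} s gm N G _ _ _ _.

Section WordSums.
Variables (F : fieldType) (V : lmodType F) (Phi : word -> V).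

Lemma sum_words_lmulw (p : nser F) a N : (size a <= N)%N ->
  \sum_(w <- words_upto N) lmulw a p w *: Phi w =
  \sum_(v <- words_upto (N - size a)) p v *: Phi (a ++ v).
Proof.
move=> ha; rewrite (sum_words_upto_reindex (words_upto (N - size a)) (cat a)).
- by apply: eq_bigr => v _; rewrite lmulw_cat.
- exact: uniq_words_upto.
- by move=> v1 v2 _ _ /catsI.
- by move=> v; rewrite mem_words_upto size_cat -leq_subRL.
move=> w hw; case: (prefixwP a w) => [[v e] _|nh]; last by rewrite lmulw_notprefix // scale0r eqxx.
by exists v => //; rewrite mem_words_upto; move: hw; rewrite e size_cat -leq_subRL.
Qed.

Lemma sum_words_rmulw (p : nser F) b N : (size b <= N)%N ->
  \sum_(w <- words_upto N) rmulw b p w *: Phi w =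
  \sum_(v <- words_upto (N - size b)) p v *: Phi (v ++ b).
Proof.
move=> hb; rewrite (sum_words_upto_reindex (words_upto (N - size b)) (fun v => v ++ b)).
- by apply: eq_bigr => v _; rewrite rmulw_cat.
- exact: uniq_words_upto.
- by move=> v1 v2 _ _ /catIs.
- by move=> v; rewrite mem_words_upto size_cat addnC -leq_subRL.
move=> w hw; case: (suffixwP b w) => [[v e] _|nh]; last by rewrite rmulw_notsuffix // scale0r eqxx.
by exists v => //; rewrite mem_words_upto; move: hw; rewrite e size_cat addnC -leq_subRL.
Qed.

Lemma sum_words_mon v N : (size v <= N)%N ->
  \sum_(w <- words_upto N) mon F v w *: Phi w = Phi v.
Proof.
move=> hv; rewrite (sum_words_upto_reindex [:: v] id).
- by rewrite big_seq1 monE eqxx scale1r.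
- by [].
- by move=> x y.
- by move=> i; rewrite inE => /eqP ->.
move=> w _; rewrite monE; case: (eqVneq w v) => [->|]; last by rewrite scale0r eqxx.
by exists v; rewrite ?inE.
Qed.

Lemma sum_words_pol_h (p : {poly F}) N :
  \sum_(w <- words_upto N) pol_h p w *: Phi w = \sum_(i < N.+1) p`_i *: Phi (nseq i lh).
Proof.
rewrite (sum_words_upto_reindex (index_iota 0 N.+1) (fun i => nseq i lh)) ?big_mkord.
- by apply: eq_bigr => i _; rewrite /pol_h all_nseq eqxx orbT size_nseq.
- exact: iota_uniq.
- by move=> i j _ _ /(congr1 size); rewrite !size_nseq.
- by move=> i; rewrite mem_index_iota size_nseq; lia.
move=> w hw; rewrite /pol_h; case: ifP => ha; last by rewrite scale0r eqxx.
by move=> _; exists (size w); [rewrite mem_index_iota; lia | exact/all_pred1P].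
Qed.

Lemma sum_wordsB (p r : nser F) N :
  \sum_(w <- words_upto N) (p w - r w) *: Phi w =
  \sum_(w <- words_upto N) p w *: Phi w - \sum_(w <- words_upto N) r w *: Phi w.
Proof. by rewrite -sumrB; apply: eq_bigr => w _; rewrite scalerBl. Qed.

Lemma sum_wordsZ c (p : nser F) N :
  \sum_(w <- words_upto N) (c * p w) *: Phi w = c *: \sum_(w <- words_upto N) p w *: Phi w.
Proof. by rewrite scaler_sumr; apply: eq_bigr => w _; rewrite scalerA. Qed.

End WordSums.

Section Representation.
Variable F : fieldType.
Variables (q : F) (f g : {poly F}).
Local Notation rel := (qgh_rel q f g).

(* The vector supported at (a, c) with value P stands for x^a P(h) y^c, and
   [act_x], [act_y], [act_h] are the left multiplications by x, y, h in that
   basis: h x^a = x^a (fiter a)(h) and y x^a = q^a x^a y + x^(a-1) (yx_coef a)(h). *)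
Definition hvec := nat * nat -> {poly F}.

Fixpoint fiter (a : nat) : {poly F} := if a is a'.+1 then f \Po fiter a' else 'X.
Fixpoint yx_coef (a : nat) : {poly F} :=
  if a is a'.+1 then g \Po fiter a' + q *: yx_coef a' else 0.

Lemma fiter_comp a : fiter a \Po f = fiter a.+1.
Proof.
elim: a => [|a IH] /=; first by rewrite comp_polyX comp_polyXr.
by rewrite -comp_polyA IH.
Qed.

Lemma hvecD (m1 m2 : hvec) ac : (m1 + m2) ac = m1 ac + m2 ac. Proof. by []. Qed.
Lemma hvecB (m1 m2 : hvec) ac : (m1 - m2) ac = m1 ac - m2 ac. Proof. by []. Qed.
Lemma hvecZ (k : F) (m : hvec) ac : (k *: m) ac = k *: m ac. Proof. by []. Qed.
Lemma hvec0 ac : (0 : hvec) ac = 0. Proof. by []. Qed.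

Lemma hvec_sum (I : Type) (s : seq I) (G : I -> hvec) ac :
  (\sum_(i <- s) G i) ac = \sum_(i <- s) G i ac.
Proof. by elim: s => [|i s IH]; rewrite ?big_nil ?big_cons //= -IH. Qed.

Definition act_x (m : hvec) : hvec := fun ac => if ac.1 is a.+1 then m (a, ac.2) else 0.
Definition act_h (m : hvec) : hvec := fun ac => fiter ac.1 * m ac.
Definition act_y (m : hvec) : hvec := fun ac =>
  (if ac.2 is c.+1 then q ^+ ac.1 *: (m (ac.1, c) \Po f) else 0) +
  yx_coef ac.1.+1 * m (ac.1.+1, ac.2).

Definition act_letter (l : 'I_3) : hvec -> hvec :=
  if val l == 0%N then act_x else if val l == 1%N then act_y else act_h.
Definition act_word (w : word) (m : hvec) : hvec := foldr act_letter m w.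

Lemma act_lx : act_letter lx = act_x. Proof. by rewrite /act_letter val_lx. Qed.
Lemma act_ly : act_letter ly = act_y. Proof. by rewrite /act_letter val_ly. Qed.
Lemma act_lh : act_letter lh = act_h. Proof. by rewrite /act_letter val_lh. Qed.

Lemma act_word_cat a b m : act_word (a ++ b) m = act_word a (act_word b m).
Proof. by rewrite /act_word foldr_cat. Qed.

Lemma act_word_nseq n l m : act_word (nseq n l) m = iter n (act_letter l) m.
Proof. by elim: n => //= n ->. Qed.

Lemma act_letterD l : {morph act_letter l : m1 m2 / m1 + m2}.
Proof.
move=> m1 m2; apply: funext => [[a c]].
case: (letterP l) => [->|[->|->]]; rewrite ?act_lx ?act_ly ?act_lh /=.
- by rewrite /act_x /= !hvecD /=; case: a => [|a] //=; rewrite addr0.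
- rewrite /act_y /= !hvecD /= mulrDr; case: c => [|c] /=; first by rewrite !add0r.
  by rewrite comp_polyD scalerDr addrACA.
- by rewrite /act_h /= !hvecD mulrDr.
Qed.

Lemma act_letterZ l (k : F) m : act_letter l (k *: m) = k *: act_letter l m.
Proof.
apply: funext => [[a c]].
case: (letterP l) => [->|[->|->]]; rewrite ?act_lx ?act_ly ?act_lh /=.
- by rewrite /act_x /= !hvecZ; case: a => [|a] //=; rewrite scaler0.
- rewrite /act_y /= !hvecZ scalerDr scalerAr; congr (_ + _).
  by case: c => [|c] /=; rewrite ?scaler0 // comp_polyZ !scalerA mulrC.
- by rewrite /act_h /= !hvecZ scalerAr.
Qed.

Lemma act_letter0 l : act_letter l 0 = 0.
Proof. by rewrite -(scale0r 0) act_letterZ !scale0r. Qed.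

Lemma act_word_sum w (I : Type) (s : seq I) (G : I -> hvec) :
  act_word w (\sum_(i <- s) G i) = \sum_(i <- s) act_word w (G i).
Proof.
elim: w => [|l w IH] //=; rewrite IH.
exact: (big_morph (act_letter l) (act_letterD l) (act_letter0 l)).
Qed.

Lemma act_wordZ w (k : F) m : act_word w (k *: m) = k *: act_word w m.
Proof. by elim: w => [|l w IH] //=; rewrite IH act_letterZ. Qed.

Lemma act_word0 w : act_word w 0 = 0.
Proof. by rewrite -(scale0r 0) act_wordZ !scale0r. Qed.

Lemma act_word_sumZ a (s : seq word) (c : word -> F) (Phi : word -> hvec) :
  \sum_(v <- s) c v *: act_word a (Phi v) = act_word a (\sum_(v <- s) c v *: Phi v).
Proof. by rewrite act_word_sum; apply: eq_bigr => v _; rewrite act_wordZ. Qed.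

Definition act_pol (p : {poly F}) (m : hvec) : hvec := fun ac => (p \Po fiter ac.1) * m ac.

Lemma iter_act_h i m : iter i act_h m = fun ac => fiter ac.1 ^+ i * m ac.
Proof.
elim: i => [|i IH] /=; first by apply: funext => ac; rewrite expr0 mul1r.
by rewrite IH; apply: funext => ac; rewrite /act_h exprS mulrA.
Qed.

Lemma sum_act_pol (p : {poly F}) N m : (size p <= N.+1)%N ->
  \sum_(i < N.+1) p`_i *: act_word (nseq i lh) m = act_pol p m.
Proof.
move=> hp; apply: funext => ac; rewrite hvec_sum /act_pol.
under eq_bigr => i _ do rewrite hvecZ act_word_nseq act_lh iter_act_h /= scalerAl.
rewrite -mulr_suml; congr (_ * _).
rewrite comp_polyE [RHS](big_ord_widen N.+1 (fun i => p`_i *: fiter ac.1 ^+ i)) //.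
rewrite [RHS]big_mkcond /=; apply: eq_bigr => i _.
by case: ltnP => // h; rewrite nth_default // scale0r.
Qed.

Lemma sum_rel_act k N m : (size f + size g + 2 <= N)%N ->
  \sum_(w <- words_upto N) rel k w *: act_word w m = 0.
Proof.
move=> hN; have hf1 : (size f <= N - 1)%N by lia.
have hg1 : (size g <= N)%N by lia.
case: (letterP k) => [->|[->|->]].
- rewrite /qgh_rel val_lx /= /nsub nmul_monl sum_wordsB sum_words_mon; last by rewrite /=; lia.
  rewrite sum_words_lmulw; last by rewrite /=; lia.
  rewrite (eq_bigr (fun v => pol_h f v *: act_word [:: lx] (act_word v m))) //.
  rewrite act_word_sumZ sum_words_pol_h sum_act_pol; last by rewrite /=; apply: leqW.
  rewrite /= act_lh act_lx; apply: funext => [[[|a] c]];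
    by rewrite hvecB hvec0 /act_h /act_x /act_pol /= ?mulr0 subrr.
- rewrite /qgh_rel val_ly /= /nsub nmul_monr sum_wordsB sum_words_mon; last by rewrite /=; lia.
  rewrite sum_words_rmulw; last by rewrite /=; lia.
  rewrite (eq_bigr (fun v => pol_h f v *: act_word v (act_y m))); last first.
    by move=> v _; rewrite act_word_cat /= act_ly.
  rewrite sum_words_pol_h sum_act_pol; last by rewrite /=; apply: leqW.
  rewrite /= act_lh act_ly; apply: funext => [[a c]].
  rewrite hvecB hvec0 /act_h /act_y /act_pol /=.
  by case: c => [|c] /=; last rewrite comp_polyM fiter_comp /=; rewrite -?mul_polyC; ring.
- rewrite /qgh_rel val_lh /= /nsub /nscale !sum_wordsB sum_wordsZ.
  rewrite !sum_words_mon; try by rewrite /=; lia.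
  rewrite sum_words_pol_h sum_act_pol; last by apply: leqW.
  rewrite /= act_lx act_ly; apply: funext => [[a c]].
  rewrite !hvecB hvecZ hvec0 /act_x /act_y /act_pol /=.
  case: a => [|a]; case: c => [|c] /=;
    by rewrite ?comp_poly0 ?scaler0 ?exprS -?mul_polyC ?polyCM; ring.
Qed.

Lemma sum_sandwich_act c a k b N m : (size f + size g + 2 + size a + size b <= N)%N ->
  \sum_(w <- words_upto N) sandwich q f g (c, a, k, b) w *: act_word w m = 0.
Proof.
move=> hN; rewrite /sandwich /= sum_wordsZ sum_words_rmulw; last by lia.
rewrite sum_words_lmulw; last by lia.
rewrite (eq_bigr (fun z => rel k z *: act_word a (act_word z (act_word b m)))).
  by rewrite act_word_sumZ sum_rel_act ?act_word0 ?scaler0 //; lia.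
by move=> z _; rewrite !act_word_cat.
Qed.

Lemma sum_words_lincomb k (c : 'I_k -> F) (ws : k.-tuple word) N m :
  (forall i, size (tnth ws i) <= N)%N ->
  \sum_(w <- words_upto N) (\sum_(i < k) c i * mon F (tnth ws i) w) *: act_word w m =
  \sum_(i < k) c i *: act_word (tnth ws i) m.
Proof.
move=> hN; under eq_bigr => w _ do rewrite scaler_suml.
rewrite exchange_big /=; apply: eq_bigr => i _.
by rewrite (sum_wordsZ (fun w => act_word w m)) sum_words_mon.
Qed.

Lemma ideal_act0 k (c : 'I_k -> F) (ws : k.-tuple word) m :
  in_qgh_ideal q f g (fun w => \sum_(i < k) c i * mon F (tnth ws i) w) ->
  \sum_(i < k) c i *: act_word (tnth ws i) m = 0.
Proof.
move=> /in_qgh_idealE [s hs].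
set N1 := (\max_(i < k) size (tnth ws i))%N.
set N2 := (\max_(t <- s) (size t.1.1.2 + size t.2))%N.
have hN1 i : (size (tnth ws i) <= N1)%N by exact: leq_bigmax.
rewrite -(@sum_words_lincomb k c ws (size f + size g + 2 + N1 + N2) m); last first.
  by move=> i; have := hN1 i; lia.
under eq_bigr => w _ do rewrite hs scaler_suml.
rewrite exchange_big big_seq big1 // => -[[[c0 a] k0] b] ht; apply: sum_sandwich_act.
have := @leq_bigmax_seq _ s xpredT
  (fun t : F * word * 'I_3 * word => size t.1.1.2 + size t.2)%N _ ht isT.
by rewrite -/N2 /=; lia.
Qed.

End Representation.

Lemma poly_free_of_sizes (F : fieldType) (I : finType) (P : I -> {poly F}) (c : I -> F)
    (S : pred I) :
  (forall i, P i != 0) -> {in S &, injective (fun i => size (P i))} ->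
  \sum_(i in S) c i *: P i = 0 -> {in S, forall i, c i = 0}.
Proof.
move=> hP hinj hsum i hi; apply/eqP/negPn/negP => hci.
pose S' j := (j \in S) && (c j != 0).
have hSi : S' i by rewrite /S' hi hci.
have [j0 /andP[hj0 hcj0] hmax] := @arg_maxnP _ i S' (fun j => size (P j)) hSi.
have := congr1 (fun p : {poly F} => p`_(size (P j0)).-1) hsum.
rewrite coef_sum coef0 (bigD1 j0) //= big1 ?addr0; last first.
  move=> j /andP[hj hne]; rewrite coefZ.
  have [->|hcj] := eqVneq (c j) 0; first by rewrite mul0r.
  have hle : (size (P j) <= size (P j0))%N by apply: hmax; rewrite /S' hj hcj.
  have hlt : (size (P j) < size (P j0))%N.
    rewrite ltn_neqAle hle andbT; apply: contraNneq hne.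
    by move=> /(hinj _ _ hj hj0) ->.
  by rewrite nth_default ?mulr0 // -ltnS prednK // size_poly_gt0.
by move/eqP; rewrite coefZ mulf_eq0 (negbTE hcj0) -/(lead_coef _) lead_coef_eq0 (negbTE (hP j0)).
Qed.

Section LowerBound.
Variable F : fieldType.
Variables (q : F) (f g : {poly F}).
Local Notation act_word := (act_word q f g).

Definition delta (p : nat * nat) (P : {poly F}) : hvec F :=
  fun ac => if ac == p then P else 0.

Lemma delta_free (I : finType) (pos : I -> nat * nat) (P : I -> {poly F}) (c : I -> F) :
  (forall i, P i != 0) -> (forall i j, pos i = pos j -> size (P i) = size (P j) -> i = j) ->
  \sum_i c i *: delta (pos i) (P i) = 0 -> forall i, c i = 0.
Proof.
move=> hP hinj hsum i.
apply: (@poly_free_of_sizes _ _ P c [pred j | pos j == pos i]) => //.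
- by move=> j k; rewrite !inE => /eqP hj /eqP hk; apply: hinj; rewrite hj hk.
- have := congr1 (fun m : hvec F => m (pos i)) hsum; rewrite hvec_sum hvec0 => e.
  rewrite -[RHS]e big_mkcond; apply: eq_bigr => j _; rewrite hvecZ /delta /= inE eq_sym.
  by case: ifP; rewrite ?scaler0.
- by rewrite inE.
Qed.

Lemma act_x_delta a c P : act_x (delta (a, c) P) = delta (a.+1, c) P.
Proof. by apply: funext => [[[|a'] c']]; rewrite /act_x /delta //= !xpair_eqE. Qed.

Lemma act_h_delta a c P : act_h f (delta (a, c) P) = delta (a, c) (fiter f a * P).
Proof.
apply: funext => [[a' c']]; rewrite /act_h /delta /=.
by case: eqP => [[-> _]|_]; rewrite ?mulr0.
Qed.

Lemma act_y_delta0 c P : act_y q f g (delta (0%N, c) P) = delta (0%N, c.+1) (P \Po f).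
Proof.
apply: funext => [[a' [|c']]]; rewrite /act_y /delta /= mulr0 addr0 !xpair_eqE ?andbF //.
rewrite eqSS; have [->|ha] := eqVneq a' 0%N.
  by rewrite expr0 scale1r; case: (c' == c); rewrite ?comp_poly0.
by rewrite ?(negbTE ha) /= comp_poly0 scaler0.
Qed.

Definition vac : hvec F := delta (0%N, 0%N) 1.

Definition test_word (a j m b c : nat) : word :=
  nseq a lx ++ nseq j lh ++ nseq m lx ++ nseq b lh ++ nseq c ly.

Lemma size_test_word a j m b c : size (test_word a j m b c) = (a + j + m + b + c)%N.
Proof. by rewrite /test_word !size_cat !size_nseq !addnA. Qed.

Lemma act_test_word a j m b c :
  act_word (test_word a j m b c) vac = delta ((m + a)%N, c) (fiter f m ^+ j * 'X^b).
Proof.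
have iter_y c' : iter c' (act_y q f g) vac = delta (0%N, c') 1.
  by elim: c' => //= c' ->; rewrite act_y_delta0 -polyC1 comp_polyC.
have iter_h b' a' c' (P : {poly F}) :
    iter b' (act_h f) (delta (a', c') P) = delta (a', c') (fiter f a' ^+ b' * P).
  by elim: b' => [|b' IH] /=; rewrite ?expr0 ?mul1r // IH act_h_delta exprS mulrA.
have iter_x n a' c' (P : {poly F}) :
    iter n (@act_x F) (delta (a', c') P) = delta ((a' + n)%N, c') P.
  by elim: n => [|n IH]; rewrite ?addn0 //= IH act_x_delta addnS.
rewrite /test_word !act_word_cat !act_word_nseq act_lx act_lh act_ly.
by rewrite iter_y iter_h /= mulr1 iter_x add0n iter_h iter_x.
Qed.

Lemma qgh_growth_ge_card n (T : finType) (wd : T -> word) (pos : T -> nat * nat)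
    (P : T -> {poly F}) :
  (forall t, size (wd t) <= n)%N -> (forall t, act_word (wd t) vac = delta (pos t) (P t)) ->
  (forall t, P t != 0) -> (forall t t', pos t = pos t' -> size (P t) = size (P t') -> t = t') ->
  (#|T| <= 3 ^ n.+1)%N -> (#|T| <= qgh_growth q f g n)%N.
Proof.
move=> hsz hact hP hinj hT; set k := #|T|.
have hind : indep_words q f g n k.
  exists [tuple wd (enum_val i) | i < k]; split=> [i|c hI]; first by rewrite tnth_mktuple.
  have := ideal_act0 vac hI.
  under eq_bigr => i _ do rewrite tnth_mktuple hact.
  apply: (delta_free (pos := fun i => pos (enum_val i)) (P := fun i => P (enum_val i))) => //.
  by move=> i j hp hs; apply/enum_val_inj/hinj.
have hk : (k < (3 ^ n.+1).+1)%N by rewrite ltnS.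
exact: (@leq_bigmax_cond _ (fun i : 'I_(3 ^ n.+1).+1 => `[< indep_words q f g n i >])
   val (Ordinal hk) (asboolT hind)).
Qed.

End LowerBound.

Lemma expn_le_exp3 m e n : (0 < e)%N -> (e * m <= n.+1)%N -> (m ^ e <= 3 ^ n.+1)%N.
Proof.
move=> he hm; apply: (@leq_trans ((3 ^ m) ^ e)).
  by rewrite leq_exp2r // ltnW // ltn_expl.
by rewrite -expnM leq_exp2l // mulnC.
Qed.

Section GrowthLowerBounds.
Variable F : fieldType.
Variables (q : F) (f g : {poly F}).

Lemma qgh_growth_ge_cube n : ((n %/ 3) ^ 3 <= qgh_growth q f g n)%N.
Proof.
set m := (n %/ 3)%N; have hm : (m * 3 <= n)%N by rewrite leq_trunc_div.
have hcard : #|{: 'I_m * 'I_m * 'I_m}| = (m ^ 3)%N.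
  by rewrite !card_prod !card_ord !expnS expn0 muln1 mulnA.
rewrite -hcard; apply: (@qgh_growth_ge_card F q f g n ('I_m * 'I_m * 'I_m)%type
  (fun t => test_word t.1.1 0 0 t.1.2 t.2) (fun t => (val t.1.1, val t.2))
  (fun t => 'X^(t.1.2))).
- move=> [[a b] c]; rewrite size_test_word /=.
  by have := ltn_ord a; have := ltn_ord b; have := ltn_ord c; lia.
- by move=> t; rewrite act_test_word expr0 mul1r.
- by move=> t; rewrite -size_poly_eq0 size_polyXn.
- move=> [[a b] c] [[a' b'] c'] /= [ea ec]; rewrite !size_polyXn => -[eb].
  by congr (_, _, _); apply: val_inj.
- by rewrite hcard; apply: expn_le_exp3 => //; lia.
Qed.

Hypothesis size_f : (2 < size f)%N.
Let d := (size f).-1.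

Lemma deg_f_ge2 : (2 <= d)%N.
Proof. by rewrite /d -ltnS prednK // ltnW // ltnW. Qed.

Lemma size_fiter k : size (fiter f k) = (d ^ k).+1.
Proof.
elim: k => [|k IH]; first by rewrite /= size_polyX expn0.
have := size_comp_poly f (fiter f k); rewrite IH /= -/d.
case: (size (f \Po fiter f k)) => [|s] /= e; last by rewrite e expnS.
by move/esym/eqP: e; rewrite expnS muln_eq0 expn_eq0 /=; have := deg_f_ge2; case: (d).
Qed.

Lemma fiter_neq0 k : fiter f k != 0.
Proof. by rewrite -size_poly_eq0 size_fiter. Qed.

Lemma size_fiterX_mulXn k j b : size (fiter f k ^+ j * 'X^b) = (j * d ^ k + b).+1.
Proof.
have hn : fiter f k ^+ j != 0 by rewrite expf_neq0 ?fiter_neq0.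
rewrite size_mulXn // -(prednK (_ : 0 < size _)%N) ?size_poly_gt0 // size_exp size_fiter /=.
by rewrite mulnC addnS addnC.
Qed.

(* Since deg f^(m) = d^m > m, the degree j d^m + b of f^(m)(h)^j h^b
   determines j, b < m. *)
Lemma size_fiterX_mulXn_inj m j j' b b' : (b < m)%N -> (b' < m)%N ->
  size (fiter f m ^+ j * 'X^b) = size (fiter f m ^+ j' * 'X^b') -> j = j' /\ b = b'.
Proof.
move=> hb hb'; rewrite !size_fiterX_mulXn => -[e].
have hD : (m <= d ^ m)%N.
  apply: (@leq_trans (2 ^ m)); first exact/ltnW/ltn_expl.
  by case: (m) => [|m'] //; rewrite leq_exp2r //; exact: deg_f_ge2.
have hbd : (b < d ^ m)%N := leq_trans hb hD.
have hbd' : (b' < d ^ m)%N := leq_trans hb' hD.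
have hD0 : (0 < d ^ m)%N by apply: leq_ltn_trans hbd.
split.
  by have := congr1 (divn^~ (d ^ m)%N) e; rewrite /= !divnMDl // !divn_small // !addn0.
by have := congr1 (modn^~ (d ^ m)%N) e; rewrite /= !modnMDl !modn_small.
Qed.

Lemma qgh_growth_ge_fourth n : ((n %/ 5) ^ 4 <= qgh_growth q f g n)%N.
Proof.
set m := (n %/ 5)%N; have hm : (m * 5 <= n)%N by rewrite leq_trunc_div.
have hcard : #|{: 'I_m * 'I_m * 'I_m * 'I_m}| = (m ^ 4)%N.
  by rewrite !card_prod !card_ord !expnS expn0 muln1 !mulnA.
rewrite -hcard; apply: (@qgh_growth_ge_card F q f g n ('I_m * 'I_m * 'I_m * 'I_m)%type
  (fun t => test_word t.1.1.1 t.1.1.2 m t.1.2 t.2) (fun t => ((m + t.1.1.1)%N, val t.2))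
  (fun t => fiter f m ^+ t.1.1.2 * 'X^(t.1.2))).
- move=> [[[a j] b] c]; rewrite size_test_word /=.
  by have := ltn_ord a; have := ltn_ord b; have := ltn_ord c; have := ltn_ord j; lia.
- by move=> t; rewrite act_test_word.
- move=> t; apply: mulf_neq0; first exact: expf_neq0 (fiter_neq0 _).
  by rewrite -size_poly_eq0 size_polyXn.
- move=> [[[a j] b] c] [[[a' j'] b'] c'] /= [/eqP ea ec].
  move/size_fiterX_mulXn_inj => /(_ (ltn_ord b) (ltn_ord b')) [ej eb].
  by rewrite eqn_add2l in ea; congr (_, _, _, _); apply: val_inj => //; apply/eqP.
- by rewrite hcard; apply: expn_le_exp3 => //; lia.
Qed.

End GrowthLowerBounds.

Lemma expn_le_divn k e n : (0 < k)%N -> (k <= n)%N ->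
  (n ^ e <= (2 * k) ^ e * (n %/ k) ^ e)%N.
Proof.
move=> hk hkn; rewrite -expnMn; elim: e => [|e IH] //; rewrite !expnS leq_mul //.
have := ltn_ceil n hk; have : (1 <= n %/ k)%N by rewrite divn_gt0.
by nia.
Qed.

Import numFieldNormedType.Exports.

Section LnRatio.
Variable R : realType.
Local Open Scope classical_set_scope.

Lemma ler_ln_nat (x y : nat) : (x <= y)%N -> ln (x%:R : R) <= ln y%:R.
Proof.
case: x => [|x] h; last by rewrite ler_ln ?posrE ?ltr0n ?ler_nat //; apply: leq_trans h.
rewrite ln0 //; case: y h => [|y] _; first by rewrite ln0.
by apply: ln_ge0; rewrite ler1n.
Qed.

Lemma ln_nat_ge0 (x : nat) : 0 <= ln (x%:R : R).
Proof. by have := ler_ln_nat (leq0n x); rewrite ln0. Qed.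

Lemma ln_natM (x y : nat) : (0 < x)%N -> (0 < y)%N ->
  ln ((x * y)%:R : R) = ln x%:R + ln y%:R.
Proof. by move=> hx hy; rewrite natrM lnM // posrE ltr0n. Qed.

Lemma ln_natX (x e : nat) : (0 < x)%N -> ln ((x ^ e)%:R : R) = e%:R * ln x%:R.
Proof. by move=> hx; rewrite natrX lnXn ?ltr0n // mulr_natl. Qed.

Lemma ln_ratio_dist (G e c C n : nat) : (0 < c)%N -> (2 <= n)%N ->
  (n ^ e <= c * G)%N -> (G <= C * n ^ e)%N ->
  `|e%:R - ln G%:R / ln (n%:R : R)| <= (ln c%:R + ln C%:R) / ln (n%:R : R).
Proof.
move=> hc hn h1 h2; set L := ln (n%:R : R).
have hL : 0 < L by apply: ln_gt0; rewrite ltr1n.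
have hne : (0 < n ^ e)%N by rewrite expn_gt0; apply/orP; left; lia.
have hG : (0 < G)%N by move: h1 hne; case: (G) => [|k]; rewrite ?muln0 //; lia.
have hC : (0 < C)%N by move: h2 hG; case: (C) => //; rewrite mul0n; lia.
have hc0 := ln_nat_ge0 c; have hC0 := ln_nat_ge0 C.
have hl1 : e%:R * L <= ln c%:R + ln G%:R.
  by rewrite -ln_natX 1?ltnW // -ln_natM //; apply: ler_ln_nat.
have hl2 : ln G%:R <= ln C%:R + e%:R * L.
  by rewrite -ln_natX 1?ltnW // -ln_natM //; apply: ler_ln_nat.
rewrite (_ : e%:R - ln G%:R / L = (e%:R * L - ln G%:R) / L); last by field; rewrite gt_eqF.
rewrite normrM normfV (gtr0_norm hL) ler_pdivrMr // mulrVK ?unitfE ?gt_eqF //.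
by rewrite ler_norml; apply/andP; split; lra.
Qed.

Lemma cvg_ln_ratio (G : nat -> nat) (e c C n0 : nat) : (0 < c)%N ->
  (forall n, (n0 <= n)%N -> (n ^ e <= c * G n)%N /\ (G n <= C * n ^ e)%N) ->
  (fun n => ln (G n)%:R / ln (n%:R : R)) @ \oo --> (e%:R : R).
Proof.
move=> hc hG; apply/cvgrPdist_le => eps heps.
set K : R := ln c%:R + ln C%:R.
set N := Num.Def.archi_bound (expR (K / eps)).
have hN : expR (K / eps) < N%:R by apply: archi_boundP; exact: ltW (expR_gt0 _).
have hNpos : (0 < N)%N by rewrite -(ltr0n R); apply: lt_trans hN; exact: expR_gt0.
exists (maxn (maxn n0 N) 2) => // n /=; rewrite !geq_max => /andP[/andP[hn0 hnN] hn2].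
have [h1 h2] := hG n hn0.
have hL : 0 < ln (n%:R : R) by apply: ln_gt0; rewrite ltr1n.
apply: le_trans (ln_ratio_dist hc hn2 h1 h2) _; rewrite ler_pdivrMr // mulrC -ler_pdivrMr //.
apply: (@le_trans _ _ (ln N%:R)); last exact: ler_ln_nat.
by rewrite -[X in X <= _]expRK ler_ln ?posrE ?expR_gt0 ?ltr0n //; exact: ltW.
Qed.

Lemma limn_esup_ln_ratio (G : nat -> nat) (e c C n0 : nat) : (0 < c)%N ->
  (forall n, (n0 <= n)%N -> (n ^ e <= c * G n)%N /\ (G n <= C * n ^ e)%N) ->
  limn_esup (fun n => (ln (G n)%:R / ln (n%:R : R))%:E) = (e%:R : R)%:E.
Proof.
move=> hc hG; apply: (cvg_limn_einf_sup _).2.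
by apply: cvg_EFin; [exact: nearW | exact: cvg_ln_ratio hc hG].
Qed.

Lemma le_limn_esup (u v : (\bar R)^nat) :
  (forall n, u n <= v n)%E -> (limn_esup u <= limn_esup v)%E.
Proof.
move=> huv; rewrite !limn_esup_lim; apply: lee_lim; [exact: is_cvg_esups|exact: is_cvg_esups|].
apply: nearW => n; apply: ge_ereal_sup => _ [k /= hk <-].
by apply: le_ereal_sup_tmp; exists (v k); [exists k | exact: huv].
Qed.

Lemma limn_esup_ln_ratio_ge (G : nat -> nat) (e c n0 : nat) : (0 < c)%N ->
  (forall n, (n0 <= n)%N -> (n ^ e <= c * G n)%N) ->
  ((e%:R : R)%:E <= limn_esup (fun n => (ln (G n)%:R / ln (n%:R : R))%:E))%E.
Proof.
move=> hc hG; rewrite -(@limn_esup_ln_ratio (fun n => minn (G n) (n ^ e)) e c 1 n0 hc).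
  apply: le_limn_esup => n; rewrite lee_fin ler_wpM2r ?invr_ge0 ?ln_nat_ge0 //.
  exact/ler_ln_nat/geq_minl.
move=> n hn; split; last by rewrite mul1n geq_minr.
by rewrite /minn; case: ltnP => _; [exact: hG | rewrite leq_pmull].
Qed.

End LnRatio.

Unset Implicit Arguments.
Theorem proposition2p3 (F : fieldType) (q : F) (f g : {poly F}) :
  (GKdim_qgh q f g = 3%:E <-> (size f <= 2)%N) /\
  ((2 < size f)%N -> (4%:E <= GKdim_qgh q f g)%E).
Proof.
have ge4 : (2 < size f)%N -> (4%:E <= GKdim_qgh q f g)%E.
  move=> hf; apply: (@limn_esup_ln_ratio_ge _ _ 4 (10 ^ 4) 5) => // n hn.
  apply: leq_trans (@expn_le_divn 5 4 n isT hn) _.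
  by apply: leq_mul => //; apply: qgh_growth_ge_fourth.
have eq3 : (size f <= 2)%N -> GKdim_qgh q f g = 3%:E.
  move=> hf; apply: (@limn_esup_ln_ratio _ _ 3 (6 ^ 3) ((size g).+2 ^ 3) 3) => // n hn.
  split.
    apply: leq_trans (@expn_le_divn 3 3 n isT hn) _.
    by apply: leq_mul => //; apply: qgh_growth_ge_cube.
  apply: leq_trans (@qgh_growth_le F q f g hf n) _.
  by rewrite -expnMn leq_exp2r //; nia.
split=> [|/ge4 //]; split=> [h|/eq3 //].
by rewrite leqNgt; apply/negP => /ge4; rewrite h lee_fin ler_nat.
Qed.
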